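(* Let $\mathcal{H}_S$ (system) and $\mathcal{H}_B$ (bath) be finite-dimensional Hilbert spaces, and fix a final time $T>0$. Let $t\mapsto \overline{H}_S(t)$ be a continuous family of Hermitian operators on $\mathcal{H}_S$, $H_B$ a Hermitian operator on $\mathcal{H}_B$, and $H_0(t)=\overline{H}_S(t)\otimes I+I\otimes H_B$. Let $H_{\mathrm{p}}$ be a time-independent Hermitian operator on $\mathcal{H}_S$ with spectral decomposition $H_{\mathrm{p}}=\sum_a\lambda_a\Pi_a$ (distinct eigenvalues $\lambda_a$, spectral projectors $\Pi_a$), let $E_{\mathrm{p}}>0$, and let $V$ be a time-independent Hermitian operator on $\mathcal{H}_S\otimes\mathcal{H}_B$. Let $\mathcal{I}$ be a set of indices of eigenvalues of $H_{\mathrm{p}}$, and set $$P=\sum_{a\in\mathcal{I}}\Pi_a,\qquad W=\sum_{a\in\mathcal{I}}\Pi_a V\Pi_a.$$ Assume that $[\overline{H}_S(t),P]=[\overline{H}_S(t),H_{\mathrm{p}}]=0$ for all $t\in[0,T]$. Let $U_V(T)$ and $U_W(T)$ be the unitary evolutions at time $T$ (solutions of $i\,\frac{d}{dt}U=H(t)U$, $U(0)=I$) generated by $H_V(t)=H_0(t)+E_{\mathrm{p}}H_{\mathrm{p}}+V$ and $H_W(t)=H_0(t)+E_{\mathrm{p}}H_{\mathrm{p}}+W$ respectively, i.e. $U_W(T)=\mathcal{T}\exp\left(-i\int_0^T(H_0(t)+E_{\mathrm{p}}H_{\mathrm{p}}+W)\,dt\right)$. Then for any unitarily invariant norm $\|\cdot\|$,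 $$\lim_{E_{\mathrm{p}}\to\infty}\big\|U_V(T)P-U_W(T)P\big\|=0.$$
   Context: All operators on $\mathcal{H}_S$ or $\mathcal{H}_B$ are regarded as operators on $\mathcal{H}_S\otimes\mathcal{H}_B$ by tensoring with the identity. $\mathcal{T}$ denotes time ordering. A norm is unitarily invariant if $\|UXV\|=\|X\|$ for all unitaries $U,V$. *)

From HB Require Import structures.
From mathcomp Require Import all_boot all_order all_algebra.
From mathcomp Require Import all_classical all_reals all_analysis.
From mathcomp Require Import complex mxtens.
Set Implicit Arguments. Unset Strict Implicit. Unset Printing Implicit Defensive.
Import Order.TTheory GRing.Theory Num.Theory.
Import numFieldNormedType.Exports.
Local Open Scope classical_set_scope.
Local Open Scope ring_scope.
Local Open Scope complex_scope.

Section QDefs.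
Variable R : realType.
Local Notation C := R[i].

Definition adjmx {m n : nat} (A : 'M[C]_(m, n)) : 'M[C]_(n, m) :=
  (map_mx (@conjc R) A)^T.

Definition hermitian_mx {n : nat} (A : 'M[C]_n) : Prop := adjmx A = A.

Definition unitary_mx {n : nat} (U : 'M[C]_n) : Prop :=
  U *m adjmx U = 1%:M /\ adjmx U *m U = 1%:M.

Definition liftS {dS dB : nat} (A : 'M[C]_dS) : 'M[C]_(dS * dB) :=
  tensmx A (1%:M : 'M[C]_dB).
Definition liftB {dS dB : nat} (B : 'M[C]_dB) : 'M[C]_(dS * dB) :=
  tensmx (1%:M : 'M[C]_dS) B.

Definition mx_continuous_on {m n : nat} (T : R) (F : R -> 'M[C]_(m, n)) : Prop :=
  forall i j,
    {within `[0, T], continuous (fun t => @complex.Re R (F t i j))} /\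
    {within `[0, T], continuous (fun t => @complex.Im R (F t i j))}.

(* U solves  i dU/dt = H(t) U,  U(0) = I  on [0,T]: U is continuous on
   [0,T] and differentiable on ]0,T[ with dU/dt = -i H(t) U(t)
   (entrywise, real and imaginary parts). *)
Definition schrodinger_solution {n : nat} (T : R) (H : R -> 'M[C]_n)
    (U : R -> 'M[C]_n) : Prop :=
  U 0 = 1%:M /\
  mx_continuous_on T U /\
  forall t, 0 < t < T -> forall i j,
    is_derive t 1 (fun s => @complex.Re R (U s i j)) (@complex.Re R ((- 'i *: (H t *m U t)) i j)) /\
    is_derive t 1 (fun s => @complex.Im R (U s i j)) (@complex.Im R ((- 'i *: (H t *m U t)) i j)).

Definition unitarily_invariant_norm {n : nat} (N : 'M[C]_n -> R) : Prop :=
  [/\ forall A, 0 <= N A,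
      forall A, N A = 0 -> A = 0,
      forall (c : C) A, N (c *: A) = ComplexField.Normc.normc c * N A,
      forall A B, N (A + B) <= N A + N B
    & forall U A V, unitary_mx U -> unitary_mx V -> N (U *m A *m V) = N A].

Definition spectral_decomposition {n k : nat} (H : 'M[C]_n)
    (lam : 'I_k -> R) (Pi : 'I_k -> 'M[C]_n) : Prop :=
  [/\ injective lam,
      forall a, hermitian_mx (Pi a) /\ Pi a *m Pi a = Pi a /\ Pi a != 0,
      forall a b, a != b -> Pi a *m Pi b = 0,
      \sum_a Pi a = 1%:M
    & H = \sum_a (lam a)%:C *: Pi a].

End QDefs.

From HB Require Import structures.
From mathcomp Require Import all_boot all_order all_algebra.
From mathcomp Require Import all_classical all_reals all_analysis.
From mathcomp Require Import complex mxtens.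
From mathcomp Require Import ring lra.
Set Implicit Arguments. Unset Strict Implicit. Unset Printing Implicit Defensive.
Import Order.TTheory GRing.Theory Num.Theory.
Import numFieldNormedType.Exports.
Local Open Scope classical_set_scope.
Local Open Scope ring_scope.
Local Open Scope complex_scope.

(* The off-diagonal generator X = sum_(a in I, b <> a) (lam_a - lam_b)^-1 Pi_a V Pi_b
   solves [Hp, X] = P V - W.  Hence, with A := P + X / Ep and using [H_W, P] = 0,
   the two Hamiltonians almost intertwine: H_W A - A H_V = O(1/Ep) on [0, T].
   Differentiating U_W^* A U_V then gives U_W(T)^* A U_V(T) = A + O(1/Ep), so the
   overlap B := U_W(T)^* U_V(T) P satisfies P B = P + O(1/Ep).  As B^* B = P, the
   leaked part B - P B has Gram matrix P - B^* P B = O(1/Ep), whence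
   B = P + O(Ep^-1/2); finally (U_V(T) - U_W(T)) P = U_W(T) (B - P).  All estimates
   use the entrywise norm sum |Re| + |Im|, which bounds every unitarily invariant
   norm up to a constant factor. *)

Section EntrywiseNorm.
Variable R : realType.
Local Notation C := R[i].
Local Notation Re := (@complex.Re R).
Local Notation Im := (@complex.Im R).

Lemma Re_add (z w : C) : Re (z + w) = Re z + Re w. Proof. by case: z; case: w. Qed.
Lemma Im_add (z w : C) : Im (z + w) = Im z + Im w. Proof. by case: z; case: w. Qed.
Lemma Re_opp (z : C) : Re (- z) = - Re z. Proof. by case: z. Qed.
Lemma Im_opp (z : C) : Im (- z) = - Im z. Proof. by case: z. Qed.
Lemma Re_mul (z w : C) : Re (z * w) = Re z * Re w - Im z * Im w.
Proof. by case: z; case: w. Qed.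
Lemma Im_mul (z w : C) : Im (z * w) = Re z * Im w + Im z * Re w.
Proof. by case: z; case: w. Qed.
Lemma Re_conj (z : C) : Re z^* = Re z. Proof. by case: z. Qed.
Lemma Im_conj (z : C) : Im z^* = - Im z. Proof. by case: z. Qed.
Lemma Re_sum (I : Type) (r : seq I) (P : pred I) (F : I -> C) :
  Re (\sum_(i <- r | P i) F i) = \sum_(i <- r | P i) Re (F i).
Proof. by elim/big_rec2: _ => // i y1 y2 _ <-; rewrite Re_add. Qed.
Lemma Im_sum (I : Type) (r : seq I) (P : pred I) (F : I -> C) :
  Im (\sum_(i <- r | P i) F i) = \sum_(i <- r | P i) Im (F i).
Proof. by elim/big_rec2: _ => // i y1 y2 _ <-; rewrite Im_add. Qed.
Lemma Re_conj_mul (z : C) : Re (z^* * z) = Re z ^+ 2 + Im z ^+ 2.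
Proof. by case: z => a b /=; rewrite -!expr2 mulNr opprK. Qed.

Definition norm1c (z : C) : R := `|Re z| + `|Im z|.

Lemma norm1c_ge0 z : 0 <= norm1c z.
Proof. exact: addr_ge0. Qed.
Lemma norm1c0 : norm1c 0 = 0.
Proof. by rewrite /norm1c normr0 addr0. Qed.
Lemma norm1c_real (x : R) : norm1c x%:C = `|x|.
Proof. by rewrite /norm1c /= normr0 addr0. Qed.
Lemma norm1c_i : norm1c 'i = 1.
Proof. by rewrite /norm1c /= normr0 normr1 add0r. Qed.
Lemma norm1cN z : norm1c (- z) = norm1c z.
Proof. by rewrite /norm1c Re_opp Im_opp !normrN. Qed.
Lemma norm1cJ z : norm1c z^* = norm1c z.
Proof. by rewrite /norm1c Re_conj Im_conj normrN. Qed.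
Lemma norm1cD z w : norm1c (z + w) <= norm1c z + norm1c w.
Proof.
rewrite /norm1c Re_add Im_add.
have := ler_normD (Re z) (Re w); have := ler_normD (Im z) (Im w); lra.
Qed.
Lemma norm1cM z w : norm1c (z * w) <= norm1c z * norm1c w.
Proof.
rewrite /norm1c Re_mul Im_mul.
have := ler_normB (Re z * Re w) (Im z * Im w).
have := ler_normD (Re z * Im w) (Im z * Re w).
rewrite !normrM.
have := normr_ge0 (Re z); have := normr_ge0 (Re w).
have := normr_ge0 (Im z); have := normr_ge0 (Im w).
nra.
Qed.
Lemma norm1c_sum (I : Type) (r : seq I) (P : pred I) (F : I -> C) :
  norm1c (\sum_(i <- r | P i) F i) <= \sum_(i <- r | P i) norm1c (F i).
Proof.
elim/big_rec2: _ => [|i y1 y2 _ h]; first by rewrite norm1c0.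
by apply: le_trans (norm1cD _ _) _; rewrite lerD2l.
Qed.

Lemma normc_le_norm1c (z : C) : ComplexField.Normc.normc z <= norm1c z.
Proof.
case: z => a b; rewrite /norm1c /ComplexField.Normc.normc /=.
rewrite -[X in _ <= X]ger0_norm ?addr_ge0 // -sqrtr_sqr ler_sqrt ?sqr_ge0 //.
rewrite -[a ^+ 2]real_normK ?num_real // -[b ^+ 2]real_normK ?num_real //.
have := normr_ge0 a; have := normr_ge0 b; nra.
Qed.

Definition mxnorm {m n : nat} (A : 'M[C]_(m, n)) : R := \sum_i \sum_j norm1c (A i j).

Section MatrixNorm.
Variables m n : nat.
Implicit Types A B : 'M[C]_(m, n).

Lemma mxnorm_ge0 A : 0 <= mxnorm A.
Proof. by apply: sumr_ge0 => i _; apply: sumr_ge0 => j _; apply: norm1c_ge0. Qed.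

Lemma mxnorm0 : mxnorm (0 : 'M[C]_(m, n)) = 0.
Proof. by apply: big1 => i _; apply: big1 => j _; rewrite mxE norm1c0. Qed.

Lemma mxnormD A B : mxnorm (A + B) <= mxnorm A + mxnorm B.
Proof.
rewrite /mxnorm -big_split; apply: ler_sum => i _.
rewrite -big_split; apply: ler_sum => j _; rewrite mxE; exact: norm1cD.
Qed.

Lemma mxnormN A : mxnorm (- A) = mxnorm A.
Proof. by apply: eq_bigr => i _; apply: eq_bigr => j _; rewrite mxE norm1cN. Qed.

Lemma mxnormB A B : mxnorm (A - B) <= mxnorm A + mxnorm B.
Proof. by rewrite -(mxnormN B) mxnormD. Qed.

Lemma mxnormZ (c : C) A : mxnorm (c *: A) <= norm1c c * mxnorm A.
Proof.
rewrite /mxnorm mulr_sumr; apply: ler_sum => i _; rewrite mulr_sumr.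
by apply: ler_sum => j _; rewrite mxE; apply: norm1cM.
Qed.

Lemma norm1c_entry_le A i j : norm1c (A i j) <= mxnorm A.
Proof.
rewrite /mxnorm (bigD1 i) //= (bigD1 j) //= -addrA lerDl.
by apply: addr_ge0; apply: sumr_ge0 => *; rewrite ?sumr_ge0 // => *; apply: norm1c_ge0.
Qed.

Lemma mxnorm_le_entries A (e : R) :
  (forall i j, norm1c (A i j) <= e) -> mxnorm A <= (m * n)%:R * e.
Proof.
move=> hA; apply: (@le_trans _ _ (\sum_(i < m) \sum_(j < n) e)).
  by apply: ler_sum => i _; apply: ler_sum => j _.
by rewrite !sumr_const !card_ord -mulrnA mulr_natl mulnC.
Qed.

Lemma mxnorm_eq0 A : mxnorm A <= 0 -> A = 0.
Proof.
move=> hA; apply/matrixP => i j; rewrite mxE.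
have := norm1c_entry_le A i j; rewrite /norm1c => h.
have := normr_ge0 (Re (A i j)); have := normr_ge0 (Im (A i j)) => h1 h2.
case: (A i j) h h1 h2 => a b /= h h1 h2.
have -> : a = 0 by apply/normr0_eq0; lra.
by have -> : b = 0 by apply/normr0_eq0; lra.
Qed.

Lemma mxnorm_adj A : mxnorm (adjmx A) = mxnorm A.
Proof.
rewrite /mxnorm exchange_big; apply: eq_bigr => i _; apply: eq_bigr => j _.
by rewrite !mxE norm1cJ.
Qed.

End MatrixNorm.

Lemma mxnormM m n p (A : 'M[C]_(m, n)) (B : 'M[C]_(n, p)) :
  mxnorm (A *m B) <= mxnorm A * mxnorm B.
Proof.
rewrite /mxnorm mulr_suml; apply: ler_sum => i _.
apply: (@le_trans _ _ (\sum_j \sum_k norm1c (A i k) * norm1c (B k j))).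
  apply: ler_sum => j _; rewrite mxE; apply: le_trans (norm1c_sum _ _ _) _.
  by apply: ler_sum => k _; apply: norm1cM.
rewrite exchange_big mulr_suml; apply: ler_sum => k _.
rewrite -mulr_sumr ler_wpM2l ?norm1c_ge0 // (bigD1 k) //= lerDl.
by apply: sumr_ge0 => *; apply: sumr_ge0 => *; apply: norm1c_ge0.
Qed.

Lemma mxnorm_mul3_le n (A B D : 'M[C]_n) (a b d : R) :
  mxnorm A <= a -> mxnorm B <= b -> mxnorm D <= d ->
  mxnorm (A *m B *m D) <= a * b * d.
Proof.
move=> hA hB hD.
have hAB := le_trans (mxnormM A B) (ler_pM (mxnorm_ge0 _) (mxnorm_ge0 _) hA hB).
exact: le_trans (mxnormM _ _) (ler_pM (mxnorm_ge0 _) (mxnorm_ge0 _) hAB hD).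
Qed.

End EntrywiseNorm.

Section Calculus.
Variables (R : realType) (T : R).
Local Notation C := R[i].
Local Notation Re := (@complex.Re R).
Local Notation Im := (@complex.Im R).

Definition ccontinuous (f : R -> C) : Prop :=
  {within `[0, T], continuous (fun t => Re (f t))} /\
  {within `[0, T], continuous (fun t => Im (f t))}.

Lemma ccontinuous_cst (c : C) : ccontinuous (fun=> c).
Proof. by split=> x; apply: cst_continuous. Qed.

Let within_continuousD (f g : R -> R) :
  {within `[0, T], continuous f} -> {within `[0, T], continuous g} ->
  {within `[0, T], continuous (fun t => f t + g t)}.
Proof. by move=> hf hg x; apply: continuousD; [exact: hf | exact: hg]. Qed.

Let within_continuousN (f : R -> R) : {within `[0, T], continuous f} ->
  {within `[0, T], continuous (fun t => - f t)}.
Proof. by move=> hf x; apply: continuousN; exact: hf. Qed.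

Let within_continuousM (f g : R -> R) :
  {within `[0, T], continuous f} -> {within `[0, T], continuous g} ->
  {within `[0, T], continuous (fun t => f t * g t)}.
Proof. by move=> hf hg x; apply: continuousM; [exact: hf | exact: hg]. Qed.

Lemma ccontinuous_add f g : ccontinuous f -> ccontinuous g ->
  ccontinuous (fun t => f t + g t).
Proof.
move=> [f1 f2] [g1 g2]; split.
  by rewrite (funext (fun t => Re_add (f t) (g t))); apply: within_continuousD.
by rewrite (funext (fun t => Im_add (f t) (g t))); apply: within_continuousD.
Qed.

Lemma ccontinuous_mul f g : ccontinuous f -> ccontinuous g ->
  ccontinuous (fun t => f t * g t).
Proof.
move=> [f1 f2] [g1 g2]; split.
  rewrite (funext (fun t => Re_mul (f t) (g t))).
  by apply: within_continuousD; last apply: within_continuousN;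
    apply: within_continuousM.
rewrite (funext (fun t => Im_mul (f t) (g t))).
by apply: within_continuousD; apply: within_continuousM.
Qed.

Lemma ccontinuous_conj f : ccontinuous f -> ccontinuous (fun t => (f t)^*).
Proof.
move=> [f1 f2]; split; first by rewrite (funext (fun t => Re_conj (f t))).
by rewrite (funext (fun t => Im_conj (f t))); apply: within_continuousN.
Qed.

Lemma ccontinuous_sum n (F : 'I_n -> R -> C) :
  (forall k, ccontinuous (F k)) -> ccontinuous (fun t => \sum_k F k t).
Proof.
move=> hF; rewrite -fct_sumE.
by apply: (big_ind ccontinuous) => //; [apply: ccontinuous_cst | apply: ccontinuous_add].
Qed.

Lemma mx_continuous_cst m n (A : 'M[C]_(m, n)) : mx_continuous_on T (fun=> A).
Proof. by move=> i j; apply: ccontinuous_cst. Qed.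

Lemma mx_continuous_add m n (F G : R -> 'M[C]_(m, n)) :
  mx_continuous_on T F -> mx_continuous_on T G ->
  mx_continuous_on T (fun t => F t + G t).
Proof.
move=> hF hG i j; change (ccontinuous (fun t => (F t + G t) i j)).
have -> : (fun t => (F t + G t) i j) = (fun t => F t i j + G t i j).
  by apply: funext => t; rewrite mxE.
exact: ccontinuous_add.
Qed.

Lemma mx_continuous_mul m n p (F : R -> 'M[C]_(m, n)) (G : R -> 'M[C]_(n, p)) :
  mx_continuous_on T F -> mx_continuous_on T G ->
  mx_continuous_on T (fun t => F t *m G t).
Proof.
move=> hF hG i j; change (ccontinuous (fun t => (F t *m G t) i j)).
have -> : (fun t => (F t *m G t) i j) = (fun t => \sum_k F t i k * G t k j).
  by apply: funext => t; rewrite mxE.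
by apply: ccontinuous_sum => k; apply: ccontinuous_mul.
Qed.

Lemma mx_continuous_adj m n (F : R -> 'M[C]_(m, n)) :
  mx_continuous_on T F -> mx_continuous_on T (fun t => adjmx (F t)).
Proof.
move=> hF i j; change (ccontinuous (fun t => adjmx (F t) i j)).
have -> : (fun t => adjmx (F t) i j) = (fun t => (F t j i)^*).
  by apply: funext => t; rewrite !mxE.
exact: ccontinuous_conj.
Qed.

Lemma continuous_bounded (f : R -> R) : 0 <= T ->
  {within `[0, T], continuous f} -> exists b, forall t, 0 <= t <= T -> `|f t| <= b.
Proof.
move=> T0 hf.
have [c1 _ hmax] := EVT_max T0 hf; have [c2 _ hmin] := EVT_min T0 hf.
exists (`|f c1| + `|f c2|) => t ht; have tT : t \in `[0, T] by rewrite in_itv.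
have := hmax t tT; have := hmin t tT.
have := ler_norm (f c1); have := ler_norm (- f c2); rewrite normrN.
have := normr_ge0 (f c1); have := normr_ge0 (f c2).
by rewrite ler_norml; move=> *; apply/andP; split; lra.
Qed.

Lemma mx_continuous_bounded m n (F : R -> 'M[C]_(m, n)) : 0 <= T ->
  mx_continuous_on T F -> exists M, forall t, 0 <= t <= T -> mxnorm (F t) <= M.
Proof.
move=> T0 hF.
have entry_bounded (ij : 'I_m * 'I_n) :
    exists b, forall t, 0 <= t <= T -> norm1c (F t ij.1 ij.2) <= b.
  have [b1 hb1] := continuous_bounded T0 (hF ij.1 ij.2).1.
  have [b2 hb2] := continuous_bounded T0 (hF ij.1 ij.2).2.
  by exists (b1 + b2) => t ht; apply: lerD; [apply: hb1 | apply: hb2].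
have [b hb] := boolp.choice entry_bounded.
exists (\sum_i \sum_j b (i, j)) => t ht.
by apply: ler_sum => i _; apply: ler_sum => j _; apply: (hb (i, j)).
Qed.

Definition is_cderive (t : R) (f : R -> C) (d : C) : Prop :=
  is_derive t 1 (fun s => Re (f s)) (Re d) /\ is_derive t 1 (fun s => Im (f s)) (Im d).

Definition is_mxderive {m n} (t : R) (F : R -> 'M[C]_(m, n)) (D : 'M[C]_(m, n)) : Prop :=
  forall i j, is_cderive t (fun s => F s i j) (D i j).

Lemma is_cderive_cst t (c : C) : is_cderive t (fun=> c) 0.
Proof. by split; apply: is_derive_cst. Qed.

Lemma is_cderive_mul t f g df dg : is_cderive t f df -> is_cderive t g dg ->
  is_cderive t (fun s => f s * g s) (f t * dg + df * g t).
Proof.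
move=> [f1 f2] [g1 g2]; split.
  rewrite (funext (fun s => Re_mul (f s) (g s))).
  apply: is_derive_eq (is_deriveB (is_deriveM f1 g1) (is_deriveM f2 g2)) _.
  by rewrite Re_add !Re_mul /GRing.scale /=; ring.
rewrite (funext (fun s => Im_mul (f s) (g s))).
apply: is_derive_eq (is_deriveD (is_deriveM f1 g2) (is_deriveM f2 g1)) _.
by rewrite Im_add !Im_mul /GRing.scale /=; ring.
Qed.

Lemma is_cderive_conj t f df : is_cderive t f df ->
  is_cderive t (fun s => (f s)^*) df^*.
Proof.
move=> [f1 f2]; split; first by rewrite Re_conj (funext (fun s => Re_conj (f s))).
by rewrite Im_conj (funext (fun s => Im_conj (f s))); apply: is_deriveN.
Qed.

Lemma is_cderive_sum t n (F : 'I_n -> R -> C) (dF : 'I_n -> C) :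
  (forall k, is_cderive t (F k) (dF k)) ->
  is_cderive t (fun s => \sum_k F k s) (\sum_k dF k).
Proof.
move=> hF; split.
  rewrite Re_sum (funext (fun s => Re_sum _ _ (F^~ s))).
  rewrite -(fct_sumE _ _ (fun k s => Re (F k s))).
  by apply: is_derive_sum => k; case: (hF k).
rewrite Im_sum (funext (fun s => Im_sum _ _ (F^~ s))).
rewrite -(fct_sumE _ _ (fun k s => Im (F k s))).
by apply: is_derive_sum => k; case: (hF k).
Qed.

Lemma is_mxderive_cst m n t (A : 'M[C]_(m, n)) : is_mxderive t (fun=> A) 0.
Proof. by move=> i j; rewrite mxE; apply: is_cderive_cst. Qed.

Lemma is_mxderive_mul m n p t (F : R -> 'M[C]_(m, n)) (G : R -> 'M[C]_(n, p)) DF DG :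
  is_mxderive t F DF -> is_mxderive t G DG ->
  is_mxderive t (fun s => F s *m G s) (F t *m DG + DF *m G t).
Proof.
move=> hF hG i j.
have -> : (fun s => (F s *m G s) i j) = (fun s => \sum_k F s i k * G s k j).
  by apply: funext => s; rewrite mxE.
rewrite !mxE -big_split.
by apply: is_cderive_sum => k; apply: is_cderive_mul.
Qed.

Lemma is_mxderive_adj m n t (F : R -> 'M[C]_(m, n)) DF :
  is_mxderive t F DF -> is_mxderive t (fun s => adjmx (F s)) (adjmx DF).
Proof.
move=> hF i j.
have -> : (fun s => adjmx (F s) i j) = (fun s => (F s j i)^*).
  by apply: funext => s; rewrite !mxE.
rewrite !mxE; exact: is_cderive_conj.
Qed.

Lemma mxderive_bound m n (F D : R -> 'M[C]_(m, n)) (M : R) :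
  mx_continuous_on T F -> (forall t, 0 < t < T -> is_mxderive t F (D t)) ->
  (forall t, 0 < t < T -> mxnorm (D t) <= M) ->
  forall t, 0 <= t <= T -> mxnorm (F t - F 0) <= (m * n)%:R * (2 * (M * t)).
Proof.
move=> hF hD hM t /andP[t0 tT]; apply: mxnorm_le_entries => i j.
have [->|t_neq0] := eqVneq t 0.
  by rewrite subrr mxE norm1c0 !mulr0.
have t_gt0 : 0 < t by rewrite lt_def t_neq0 t0.
have sub : `[0, t] `<=` `[0, T].
  by move=> x /=; rewrite !in_itv /= => /andP[-> /le_trans]; apply.
have inside x : x \in `]0, t[ -> 0 < x < T.
  by rewrite in_itv /= => /andP[-> /lt_le_trans]; apply.
have mvt (g : R -> R) (dg : R -> R) :
    (forall x, 0 < x < T -> is_derive x 1 g (dg x)) ->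
    (forall x, 0 < x < T -> `|dg x| <= M) ->
    {within `[0, T], continuous g} -> `|g t - g 0| <= M * t.
  move=> hg hdg cg.
  have [c /inside c_in ->] := MVT t_gt0 (fun x hx => hg x (inside x hx))
    (continuous_subspaceW sub cg).
  by rewrite subr0 normrM (ger0_norm t0) ler_wpM2r // hdg.
rewrite !mxE /norm1c Re_add Im_add Re_opp Im_opp mulr_natl mulr2n.
have hDij x : 0 < x < T -> norm1c (D x i j) <= M.
  by move=> hx; apply: le_trans (norm1c_entry_le _ i j) (hM x hx).
apply: lerD.
- apply: (mvt (fun s => Re (F s i j)) (fun s => Re (D s i j))) (hF i j).1.
    by move=> x /hD /(_ i j) [].
  by move=> x /hDij; apply: le_trans; rewrite lerDl.
- apply: (mvt (fun s => Im (F s i j)) (fun s => Im (D s i j))) (hF i j).2.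
    by move=> x /hD /(_ i j) [].
  by move=> x /hDij; apply: le_trans; rewrite lerDr.
Qed.

Lemma mxderive0_const m n (F : R -> 'M[C]_(m, n)) :
  mx_continuous_on T F -> (forall t, 0 < t < T -> is_mxderive t F 0) ->
  forall t, 0 <= t <= T -> F t = F 0.
Proof.
move=> hF hD t ht; apply/eqP; rewrite -subr_eq0; apply/eqP/mxnorm_eq0.
have := mxderive_bound hF hD (M := 0) _ ht; rewrite mul0r !mulr0; apply.
by move=> s _; rewrite mxnorm0.
Qed.

End Calculus.

Section Adjoint.
Variable R : realType.
Local Notation C := R[i].

Lemma adjmxD m n (A B : 'M[C]_(m, n)) : adjmx (A + B) = adjmx A + adjmx B.
Proof. by apply/matrixP => i j; rewrite !mxE rmorphD. Qed.
Lemma adjmxN m n (A : 'M[C]_(m, n)) : adjmx (- A) = - adjmx A.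
Proof. by apply/matrixP => i j; rewrite !mxE rmorphN. Qed.
Lemma adjmxB m n (A B : 'M[C]_(m, n)) : adjmx (A - B) = adjmx A - adjmx B.
Proof. by rewrite adjmxD adjmxN. Qed.
Lemma adjmxZ m n (c : C) (A : 'M[C]_(m, n)) : adjmx (c *: A) = conjc c *: adjmx A.
Proof. by apply/matrixP => i j; rewrite !mxE rmorphM. Qed.
Lemma adjmxM m n p (A : 'M[C]_(m, n)) (B : 'M[C]_(n, p)) :
  adjmx (A *m B) = adjmx B *m adjmx A.
Proof. by rewrite /adjmx map_mxM trmx_mul. Qed.
Lemma adjmxK m n (A : 'M[C]_(m, n)) : adjmx (adjmx A) = A.
Proof. by apply/matrixP => i j; rewrite !mxE conjcK. Qed.
Lemma adjmx1 n : adjmx (1%:M : 'M[C]_n) = 1%:M.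
Proof. by apply/matrixP => i j; rewrite !mxE rmorphMn rmorph1 eq_sym. Qed.
Lemma adjmx_sum m n (I : Type) (r : seq I) (P : pred I) (F : I -> 'M[C]_(m, n)) :
  adjmx (\sum_(i <- r | P i) F i) = \sum_(i <- r | P i) adjmx (F i).
Proof.
elim/big_rec2: _ => [|i y1 y2 _ <-]; last by rewrite adjmxD.
by apply/matrixP => i j; rewrite !mxE conjc0.
Qed.

Lemma unitary_mxC n (U : 'M[C]_n) : adjmx U *m U = 1%:M -> unitary_mx U.
Proof. by move=> hU; split=> //; apply: mulmx1C. Qed.

End Adjoint.

Section Lift.
Variables (R : realType) (dS dB : nat).
Local Notation C := R[i].
Local Notation L := (@liftS R dS dB).

Lemma liftSE (A : 'M[C]_dS) i j :
  L A i j = A (mxtens_unindex i).1 (mxtens_unindex j).1 *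
            (1%:M : 'M[C]_dB) (mxtens_unindex i).2 (mxtens_unindex j).2.
Proof. exact: mxE. Qed.

Lemma liftSD A B : L (A + B) = L A + L B.
Proof. by apply/matrixP => i j; rewrite [RHS]mxE !liftSE mxE mulrDl. Qed.
Lemma liftSZ c A : L (c *: A) = c *: L A.
Proof. by apply/matrixP => i j; rewrite [RHS]mxE !liftSE mxE mulrA. Qed.
Lemma liftS_sum (I : Type) (r : seq I) (P : pred I) (F : I -> 'M[C]_dS) :
  L (\sum_(i <- r | P i) F i) = \sum_(i <- r | P i) L (F i).
Proof.
elim/big_rec2: _ => [|i y1 y2 _ <-]; last by rewrite liftSD.
by apply/matrixP => i j; rewrite [RHS]mxE liftSE mxE mul0r.
Qed.
Lemma liftSM A B : L (A *m B) = L A *m L B.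
Proof. by rewrite /liftS tensmx_mul mulmx1. Qed.
Lemma liftS1 : L 1%:M = 1%:M.
Proof.
apply/matrixP => i j.
case: (mxtens_indexP i) => i1 i2; case: (mxtens_indexP j) => j1 j2.
rewrite /liftS tensmxE !mxE (inj_eq (can_inj (@mxtens_indexK _ _))) xpair_eqE.
by case: (i1 == j1); case: (i2 == j2); rewrite /= ?mulr1 ?mulr0 ?mul0r.
Qed.
Lemma liftS_adj A : adjmx (L A) = L (adjmx A).
Proof. by rewrite /adjmx /liftS map_mxT trmx_tens -/(adjmx 1%:M) adjmx1. Qed.
Lemma liftB_adj B : adjmx (@liftB R dS dB B) = liftB (adjmx B).
Proof. by rewrite /adjmx /liftB map_mxT trmx_tens -/(adjmx 1%:M) adjmx1. Qed.
Lemma liftB_liftS_comm B A : @liftB R dS dB B *m L A = L A *m liftB B.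
Proof. by rewrite /liftB /liftS !tensmx_mul !mul1mx !mulmx1. Qed.

Lemma mx_continuous_liftS (T : R) (F : R -> 'M[C]_dS) :
  mx_continuous_on T F -> mx_continuous_on T (fun t => L (F t)).
Proof.
move=> hF i j; change (ccontinuous T (fun t => L (F t) i j)).
rewrite (funext (fun t => liftSE (F t) i j)).
by apply: ccontinuous_mul; [apply: hF | apply: ccontinuous_cst].
Qed.

End Lift.

Section GramBounds.
Variable R : realType.
Local Notation C := R[i].
Local Notation Re := (@complex.Re R).
Local Notation Im := (@complex.Im R).

Lemma norm1c_entry_le_gram m n (B : 'M[C]_(m, n)) i j :
  norm1c (B i j) <= 2 * Num.sqrt (Re ((adjmx B *m B) j j)).
Proof.
have gram : Re (B i j) ^+ 2 + Im (B i j) ^+ 2 <= Re ((adjmx B *m B) j j).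
  rewrite mxE Re_sum (bigD1 i) //= !mxE Re_conj_mul lerDl.
  by apply: sumr_ge0 => l _; rewrite !mxE Re_conj_mul addr_ge0 ?sqr_ge0.
have sqr_le (x y : R) : x ^+ 2 + y ^+ 2 <= Re ((adjmx B *m B) j j) ->
    `|x| <= Num.sqrt (Re ((adjmx B *m B) j j)).
  move=> h; have := le_trans (addr_ge0 (sqr_ge0 x) (sqr_ge0 y)) h => g0.
  by rewrite -sqrtr_sqr ler_sqrt //; apply: le_trans h; rewrite lerDl sqr_ge0.
have := sqr_le _ _ gram; have : `|Im (B i j)| <= Num.sqrt (Re ((adjmx B *m B) j j)).
  by apply: (sqr_le _ (Re (B i j))); rewrite addrC.
rewrite /norm1c; lra.
Qed.

Lemma mxnorm_le_gram m n (B : 'M[C]_(m, n)) :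
  mxnorm B <= (m * n)%:R * (2 * Num.sqrt (mxnorm (adjmx B *m B))).
Proof.
apply: mxnorm_le_entries => i j; apply: le_trans (norm1c_entry_le_gram B i j) _.
rewrite ler_wpM2l // ler_sqrt ?mxnorm_ge0 //.
apply: le_trans (norm1c_entry_le _ j j); rewrite /norm1c.
by apply: le_trans (ler_norm _) _; rewrite lerDl.
Qed.

Lemma mxnorm_unitary n (U : 'M[C]_n) : adjmx U *m U = 1%:M ->
  mxnorm U <= (n * n)%:R * 2.
Proof.
move=> hU; apply: mxnorm_le_entries => i j.
by have := norm1c_entry_le_gram U i j; rewrite hU mxE eqxx /= sqrtr1 mulr1.
Qed.

Section PartialIsometry.
Variables (n : nat) (q A : 'M[C]_n).
Hypotheses (q_adj : adjmx q = q) (qq : q *m q = q) (AA : adjmx A *m A = q).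

Lemma gram_sub_proj_mul :
  let D := q *m A - q in
  adjmx (A - q *m A) *m (A - q *m A) =
  - (q *m D + adjmx D *m q + adjmx D *m D).
Proof.
move=> D; have qqA : q *m (q *m A) = q *m A by rewrite mulmxA qq.
have -> : adjmx (A - q *m A) *m (A - q *m A) = q - adjmx A *m q *m A.
  rewrite adjmxB adjmxM q_adj mulmxBl !mulmxBr AA !mulmxA.
  by rewrite -[adjmx A *m q *m q]mulmxA qq subrr subr0.
rewrite /D adjmxB adjmxM q_adj !mulmxBl !mulmxBr !mulmxA.
rewrite -[adjmx A *m q *m q]mulmxA !qq.
set a := q *m A; set b := adjmx A *m q; set c := b *m A.
by rewrite [X in _ = - X]addrC addrA subrK addrA subrK opprB.
Qed.

Lemma partial_isometry_proj_bound : mxnorm (q *m A - q) <= 1 ->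
  mxnorm (A - q) <=
  ((n * n)%:R * 2 * Num.sqrt (2 * mxnorm q + 1) + 1) * Num.sqrt (mxnorm (q *m A - q)).
Proof.
set D := q *m A - q; set d := mxnorm D => d1.
have d0 : 0 <= d by apply: mxnorm_ge0.
have q0 := mxnorm_ge0 q.
have leak : mxnorm (adjmx (A - q *m A) *m (A - q *m A)) <= (2 * mxnorm q + 1) * d.
  rewrite gram_sub_proj_mul -/D mxnormN.
  apply: le_trans (mxnormD _ _) _; apply: le_trans (lerD (mxnormD _ _) (lexx _)) _.
  have := mxnormM q D; have := mxnormM (adjmx D) q; have := mxnormM (adjmx D) D.
  rewrite mxnorm_adj -/d => h1 h2 h3.
  have : d * d <= d by rewrite ler_piMr.
  nra.
have -> : A - q = (A - q *m A) + D by rewrite /D addrA subrK.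
apply: le_trans (mxnormD _ _) _.
apply: le_trans (lerD (mxnorm_le_gram _) (lexx d)) _.
have hg : Num.sqrt (mxnorm (adjmx (A - q *m A) *m (A - q *m A))) <=
    Num.sqrt (2 * mxnorm q + 1) * Num.sqrt d.
  by rewrite -sqrtrM ?addr_ge0 ?mulr_ge0 // ler_sqrt // mulr_ge0 ?addr_ge0 ?mulr_ge0.
have sd : d <= Num.sqrt d.
  have s1 : Num.sqrt d <= 1 by rewrite -sqrtr1 ler_sqrt.
  by rewrite -{1}(sqr_sqrtr d0) expr2 ler_piMr ?sqrtr_ge0.
have nn0 : 0 <= (n * n)%:R :> R by [].
have := sqrtr_ge0 d; have := sqrtr_ge0 (2 * mxnorm q + 1); nra.
Qed.

End PartialIsometry.
End GramBounds.

Section InvariantNorm.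
Variables (R : realType) (n : nat) (N : 'M[R[i]]_n -> R).
Hypothesis hN : unitarily_invariant_norm N.

Lemma invariant_norm_sum_le (I : Type) (r : seq I) (P : pred I) (F : I -> 'M[R[i]]_n) :
  N (\sum_(i <- r | P i) F i) <= \sum_(i <- r | P i) N (F i).
Proof.
case: hN => _ _ hZ hD _; elim/big_rec2: _ => [|i y1 y2 _ h].
  by have := hZ 0 0; rewrite scale0r ComplexField.Normc.normc0 mul0r => ->.
by apply: le_trans (hD _ _) _; rewrite lerD2l.
Qed.

Lemma invariant_norm_le_mxnorm : exists2 K, 0 <= K & forall A, N A <= K * mxnorm A.
Proof.
case: (hN) => N0 _ hZ _ _.
exists (\sum_i \sum_j N (delta_mx i j)); first by do 2!apply: sumr_ge0 => ? _.
move=> A.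
rewrite {1}(matrix_sum_delta A); apply: le_trans (invariant_norm_sum_le _ _ _) _.
apply: (@le_trans _ _ (\sum_i \sum_j norm1c (A i j) * N (delta_mx i j))).
  apply: ler_sum => i _; apply: le_trans (invariant_norm_sum_le _ _ _) _.
  by apply: ler_sum => j _; rewrite hZ ler_wpM2r // normc_le_norm1c.
rewrite /mxnorm mulr_sumr; apply: ler_sum => i _; rewrite mulr_sumr.
apply: ler_sum => j _; rewrite mulrC ler_wpM2r ?norm1c_ge0 //.
rewrite (bigD1 i) //= (bigD1 j) //= -addrA lerDl.
by apply: addr_ge0; apply: sumr_ge0 => *; rewrite ?sumr_ge0.
Qed.

End InvariantNorm.

Section Spectral.
Variables (R : realType) (dS dB k : nat).
Local Notation C := R[i].
Variables (Hp : 'M[C]_dS) (lam : 'I_k -> R) (Pi : 'I_k -> 'M[C]_dS)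
  (V : 'M[C]_(dS * dB)) (I : {set 'I_k}).
Hypothesis hsp : spectral_decomposition Hp lam Pi.
Local Notation L := (@liftS R dS dB).
Local Notation P := (\sum_(a in I) Pi a).
Local Notation W := (\sum_(a in I) (L (Pi a) *m V *m L (Pi a))).

Lemma Pi_mul a b : Pi a *m Pi b = if a == b then Pi a else 0.
Proof.
case: hsp => _ hPi hortho _ _; case: eqP => [<-|/eqP]; last exact: hortho.
by case: (hPi a) => _ [].
Qed.

Lemma Pi_adj a : adjmx (Pi a) = Pi a.
Proof. by case: hsp => _ hPi _ _ _; case: (hPi a). Qed.

Let sum_in_eq (M : 'M[C]_dS) b :
  \sum_(a in I) (if a == b then M else 0) = if b \in I then M else 0.
Proof.
case: ifP => bI; last by apply: big1 => a aI; case: eqP => // eab; rewrite -eab aI in bI.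
by rewrite (bigD1 b) //= eqxx big1 ?addr0 // => a /andP[_ /negbTE ->].
Qed.

Lemma proj_mulPi b : P *m Pi b = if b \in I then Pi b else 0.
Proof.
rewrite mulmx_suml -sum_in_eq; apply: eq_bigr => a _.
by rewrite Pi_mul; case: eqP => // ->.
Qed.

Lemma Pi_mul_proj b : Pi b *m P = if b \in I then Pi b else 0.
Proof.
rewrite mulmx_sumr -sum_in_eq; apply: eq_bigr => a _.
by rewrite Pi_mul eq_sym; case: eqP => // ->.
Qed.

Lemma proj_idem : P *m P = P.
Proof. by rewrite mulmx_sumr; apply: eq_bigr => b bI; rewrite proj_mulPi bI. Qed.

Lemma proj_adj : adjmx P = P.
Proof. by rewrite adjmx_sum; apply: eq_bigr => a _; rewrite Pi_adj. Qed.

Lemma Hp_mulPi b : Hp *m Pi b = (lam b)%:C *: Pi b.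
Proof.
case: hsp => _ _ _ _ ->; rewrite mulmx_suml (bigD1 b) //= big1 ?addr0.
  by rewrite -scalemxAl Pi_mul eqxx.
by move=> a /negbTE ne; rewrite -scalemxAl Pi_mul ne scaler0.
Qed.

Lemma Pi_mulHp b : Pi b *m Hp = (lam b)%:C *: Pi b.
Proof.
case: hsp => _ _ _ _ ->; rewrite mulmx_sumr (bigD1 b) //= big1 ?addr0.
  by rewrite -scalemxAr Pi_mul eqxx.
by move=> a; rewrite eq_sym => /negbTE ne; rewrite -scalemxAr Pi_mul ne scaler0.
Qed.

Lemma Hp_proj_comm : Hp *m P = P *m Hp.
Proof.
by rewrite mulmx_sumr mulmx_suml; apply: eq_bigr => a _; rewrite Hp_mulPi Pi_mulHp.
Qed.

Lemma lift_proj_mulW : L P *m W = W.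
Proof.
rewrite mulmx_sumr; apply: eq_bigr => a aI.
by rewrite !mulmxA -liftSM proj_mulPi aI.
Qed.

Lemma W_mul_lift_proj : W *m L P = W.
Proof.
rewrite mulmx_suml; apply: eq_bigr => a aI.
by rewrite -mulmxA -liftSM Pi_mul_proj aI.
Qed.

Lemma W_hermitian : hermitian_mx V -> hermitian_mx W.
Proof.
rewrite /hermitian_mx adjmx_sum => hV; apply: eq_bigr => a _.
by rewrite !adjmxM liftS_adj Pi_adj hV mulmxA.
Qed.

Definition Xgen : 'M[C]_(dS * dB) :=
  \sum_(a in I) \sum_(b | b != a) ((lam a - lam b)^-1)%:C *: (L (Pi a) *m V *m L (Pi b)).

Lemma liftHp_Xgen_commutator : L Hp *m Xgen - Xgen *m L Hp = L P *m V - W.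
Proof.
have lam_inj : injective lam by case: hsp.
rewrite /Xgen mulmx_sumr mulmx_suml -sumrB liftS_sum mulmx_suml -sumrB.
apply: eq_bigr => a aI; rewrite mulmx_sumr mulmx_suml -sumrB.
have -> : L (Pi a) *m V - L (Pi a) *m V *m L (Pi a) =
    \sum_(b | b != a) L (Pi a) *m V *m L (Pi b).
  rewrite -{1}[L (Pi a) *m V]mulmx1 -(liftS1 R dS dB).
  case: hsp => _ _ _ <- _; rewrite liftS_sum mulmx_sumr (bigD1 a) //=.
  by rewrite addrAC subrr add0r.
apply: eq_bigr => b ba.
rewrite -scalemxAr -scalemxAl !mulmxA -liftSM Hp_mulPi liftSZ.
rewrite -!mulmxA -liftSM Pi_mulHp liftSZ -!scalemxAl -!scalemxAr !scalerA -scalerBl.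
rewrite !mulmxA -!rmorphM -rmorphB /= -mulrBr mulrC divff ?scale1r //.
by rewrite subr_eq0; apply: contra ba => /eqP /lam_inj ->.
Qed.

End Spectral.

Section Evolution.
Variables (R : realType) (T : R) (n : nat).
Local Notation C := R[i].
Implicit Types (H U : R -> 'M[C]_n) (A : 'M[C]_n).

Lemma schrodinger_adj_derive H U t :
  schrodinger_solution T H U -> hermitian_mx (H t) -> 0 < t < T ->
  is_mxderive t (fun s => adjmx (U s)) ('i *: (adjmx (U t) *m H t)).
Proof.
case=> _ [_ hder] hH /hder dU.
have := is_mxderive_adj dU; rewrite adjmxZ adjmxM hH.
congr (is_mxderive _ _ (_ *: _)).
by change ((- 'i%C)^*%C = 'i%C :> C); rewrite /= oppr0 opprK.
Qed.

Lemma sandwich_derive HV HW UV UW A t :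
  schrodinger_solution T HV UV -> schrodinger_solution T HW UW ->
  hermitian_mx (HW t) -> 0 < t < T ->
  is_mxderive t (fun s => adjmx (UW s) *m A *m UV s)
    ('i *: (adjmx (UW t) *m (HW t *m A - A *m HV t) *m UV t)).
Proof.
move=> hV hW hHW ht.
have dW := is_mxderive_mul (schrodinger_adj_derive hW hHW ht) (is_mxderive_cst t A).
have [_ [_ /(_ t ht) dV]] := hV.
have := is_mxderive_mul dW dV; congr is_mxderive.
rewrite mulmx0 add0r -scalemxAr -!scalemxAl scaleNr addrC -scalerBr.
by rewrite mulmxBr mulmxBl !mulmxA.
Qed.

Lemma sandwich_continuous HV HW UV UW A :
  schrodinger_solution T HV UV -> schrodinger_solution T HW UW ->
  mx_continuous_on T (fun s => adjmx (UW s) *m A *m UV s).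
Proof.
case=> _ [cV _] [_ [cW _]].
by apply: mx_continuous_mul cV; apply: mx_continuous_mul (mx_continuous_cst _ _);
  apply: mx_continuous_adj.
Qed.

Lemma sandwich_const HV HW UV UW A :
  schrodinger_solution T HV UV -> schrodinger_solution T HW UW ->
  (forall t, 0 < t < T -> hermitian_mx (HW t)) ->
  (forall t, 0 < t < T -> HW t *m A = A *m HV t) ->
  forall t, 0 <= t <= T -> adjmx (UW t) *m A *m UV t = A.
Proof.
move=> hV hW hHW hA t ht.
have [UV0 _] := hV; have [UW0 _] := hW.
rewrite (mxderive0_const (sandwich_continuous A hV hW) _ ht).
  by rewrite UV0 UW0 adjmx1 mulmx1 mul1mx.
move=> s hs; have := sandwich_derive A hV hW (hHW s hs) hs.
by rewrite hA // subrr mulmx0 mul0mx scaler0.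
Qed.

Section OneEvolution.
Variables (H U : R -> 'M[C]_n).
Hypotheses (hU : schrodinger_solution T H U)
  (hH : forall t, 0 < t < T -> hermitian_mx (H t)).

Lemma schrodinger_unitary t : 0 <= t <= T -> adjmx (U t) *m U t = 1%:M.
Proof.
move=> ht; rewrite -[adjmx (U t)]mulmx1.
by apply: (sandwich_const hU hU hH) => // s _; rewrite mulmx1 mul1mx.
Qed.

Lemma schrodinger_conserved Q : (forall t, 0 < t < T -> H t *m Q = Q *m H t) ->
  forall t, 0 <= t <= T -> adjmx (U t) *m Q = Q *m adjmx (U t).
Proof.
move=> hQ t ht.
have unitU : unitary_mx (U t) by apply: unitary_mxC; apply: schrodinger_unitary.
rewrite -{2}(sandwich_const hU hU hH hQ ht) -!mulmxA.
by case: unitU => -> _; rewrite mulmx1.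
Qed.

End OneEvolution.

Lemma sandwich_bound HV HW UV UW A (eps : R) :
  schrodinger_solution T HV UV -> schrodinger_solution T HW UW ->
  (forall t, 0 < t < T -> hermitian_mx (HV t)) ->
  (forall t, 0 < t < T -> hermitian_mx (HW t)) ->
  (forall t, 0 < t < T -> mxnorm (HW t *m A - A *m HV t) <= eps) -> 0 <= T ->
  mxnorm (adjmx (UW T) *m A *m UV T - A) <=
    (n * n)%:R * (2 * ((n * n)%:R * 2 * eps * ((n * n)%:R * 2) * T)).
Proof.
move=> hV hW hHV hHW heps T0.
pose D t := 'i *: (adjmx (UW t) *m (HW t *m A - A *m HV t) *m UV t).
have hD t : 0 < t < T -> is_mxderive t (fun s => adjmx (UW s) *m A *m UV s) (D t).
  by move=> ht; apply: sandwich_derive (hHW t ht) ht.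
have hM t : 0 < t < T -> mxnorm (D t) <= (n * n)%:R * 2 * eps * ((n * n)%:R * 2).
  move=> ht; have ht' : 0 <= t <= T by case/andP: ht => /ltW -> /ltW ->.
  apply: le_trans (mxnormZ _ _) _; rewrite norm1c_i mul1r.
  apply: mxnorm_mul3_le (heps t ht) _.
    by rewrite mxnorm_adj mxnorm_unitary // (schrodinger_unitary hW).
  by rewrite mxnorm_unitary // (schrodinger_unitary hV).
have /(_ T) := mxderive_bound (sandwich_continuous A hV hW) hD hM.
have [UV0 _] := hV; have [UW0 _] := hW.
by rewrite UV0 UW0 adjmx1 mulmx1 mul1mx lexx T0; apply.
Qed.

End Evolution.

Section StrongPenalty.
Variables (R : realType) (dS dB k : nat) (T : R)
  (HSbar : R -> 'M[R[i]]_dS) (HB : 'M[R[i]]_dB) (Hp : 'M[R[i]]_dS)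
  (lam : 'I_k -> R) (Pi : 'I_k -> 'M[R[i]]_dS)
  (V : 'M[R[i]]_(dS * dB)) (I : {set 'I_k}).
Local Notation C := R[i].
Local Notation n := (dS * dB)%N.
Local Notation L := (@liftS R dS dB).
Local Notation P := (\sum_(a in I) Pi a).
Local Notation p := (L P).
Local Notation W := (\sum_(a in I) (L (Pi a) *m V *m L (Pi a))).
Local Notation H0 t := (L (HSbar t) + liftB HB).
Local Notation HV Ep t := (H0 t + (Ep%:C) *: L Hp + V).
Local Notation HW Ep t := (H0 t + (Ep%:C) *: L Hp + W).

Hypotheses (T_gt0 : 0 < T) (HSbar_cont : mx_continuous_on T HSbar)
  (HSbar_herm : forall t, 0 <= t <= T -> hermitian_mx (HSbar t))
  (HB_herm : hermitian_mx HB) (Hp_herm : hermitian_mx Hp)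
  (hsp : spectral_decomposition Hp lam Pi) (V_herm : hermitian_mx V)
  (HSbar_comm : forall t, 0 <= t <= T ->
     HSbar t *m P = P *m HSbar t /\ HSbar t *m Hp = Hp *m HSbar t).

Let Xe (Ep : R) : 'M[C]_n := (Ep^-1)%:C *: Xgen lam Pi V I.

Let closed_of_open t : 0 < t < T -> 0 <= t <= T.
Proof. by case/andP => /ltW -> /ltW ->. Qed.

Lemma lift_proj_adj : adjmx p = p.
Proof. by rewrite liftS_adj (proj_adj I hsp). Qed.

Lemma lift_proj_idem : p *m p = p.
Proof. by rewrite -liftSM (proj_idem I hsp). Qed.

Lemma penalized_hermitian (Ep : R) (A : 'M[C]_n) : hermitian_mx A ->
  forall t, 0 < t < T -> hermitian_mx (H0 t + Ep%:C *: L Hp + A).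
Proof.
move=> hA t /closed_of_open ht.
rewrite /hermitian_mx !adjmxD adjmxZ !liftS_adj liftB_adj conjc_real.
by rewrite (HSbar_herm ht) HB_herm Hp_herm hA.
Qed.

Lemma HW_proj_comm (Ep : R) t : 0 <= t <= T -> HW Ep t *m p = p *m HW Ep t.
Proof.
move=> ht; have [HSbarP _] := HSbar_comm ht.
rewrite !mulmxDl !mulmxDr -scalemxAl -scalemxAr -!liftSM HSbarP (Hp_proj_comm I hsp).
by rewrite liftB_liftS_comm (lift_proj_mulW V I hsp) (W_mul_lift_proj V I hsp).
Qed.

Lemma HW_HV_intertwining (Ep : R) t : 0 < Ep -> 0 <= t <= T ->
  HW Ep t *m (p + Xe Ep) - (p + Xe Ep) *m HV Ep t =
  H0 t *m Xe Ep - Xe Ep *m H0 t + (W *m Xe Ep - Xe Ep *m V).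
Proof.
move=> Ep_gt0 ht; set X := Xe Ep; set K := H0 t + Ep%:C *: L Hp.
have splitB (A B D E : 'M[C]_n) : (A + B) - (D + E) = (A - D) + (B - E).
  by rewrite opprD addrACA.
have scaled_gap : Ep%:C *: (L Hp *m X - X *m L Hp) = p *m V - W.
  rewrite /X /Xe -scalemxAl -scalemxAr -scalerBr scalerA -rmorphM /= mulfV ?gt_eqF //.
  by rewrite scale1r (liftHp_Xgen_commutator V I hsp).
have gap : K *m X - X *m K = H0 t *m X - X *m H0 t + (p *m V - W).
  rewrite mulmxDl mulmxDr splitB -[(_ *: L Hp) *m X]scalemxAl.
  by rewrite -[X *m (_ *: L Hp)]scalemxAr -scalerBr scaled_gap.
have proj_part : (K + W) *m p - p *m (K + V) = W - p *m V.
  rewrite HW_proj_comm // -mulmxBr splitB subrr add0r mulmxBr.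
  by rewrite (lift_proj_mulW V I hsp).
rewrite mulmxDr [(p + X) *m _]mulmxDl splitB proj_part.
rewrite [(K + W) *m X]mulmxDl [X *m (K + V)]mulmxDr splitB gap -opprB.
by rewrite -addrA addrCA addKr.
Qed.

Lemma Xe_norm_le (Ep : R) : 0 < Ep ->
  mxnorm (Xe Ep) <= Ep^-1 * mxnorm (Xgen lam Pi V I).
Proof.
move=> Ep_gt0; apply: le_trans (mxnormZ _ _) _.
by rewrite norm1c_real ger0_norm // invr_ge0 ltW.
Qed.

Lemma intertwining_bound : exists c, forall Ep t, 0 < Ep -> 0 <= t <= T ->
  mxnorm (HW Ep t *m (p + Xe Ep) - (p + Xe Ep) *m HV Ep t) <= Ep^-1 * c.
Proof.
have [M hM] : exists M, forall t, 0 <= t <= T -> mxnorm (H0 t) <= M.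
  apply: mx_continuous_bounded (ltW T_gt0) _.
  exact: mx_continuous_add (mx_continuous_liftS HSbar_cont) (mx_continuous_cst _ _).
exists ((M + M + mxnorm W + mxnorm V) * mxnorm (Xgen lam Pi V I)) => Ep t Ep_gt0 ht.
have hX := Xe_norm_le Ep_gt0.
have hH0 := hM t ht; have H0_ge0 := le_trans (mxnorm_ge0 _) hH0.
have := mxnormM (H0 t) (Xe Ep); have := mxnormM (Xe Ep) (H0 t).
have := mxnormM W (Xe Ep); have := mxnormM (Xe Ep) V.
rewrite HW_HV_intertwining //.
have := mxnormB (H0 t *m Xe Ep) (Xe Ep *m H0 t).
have := mxnormB (W *m Xe Ep) (Xe Ep *m V).
have := mxnormD (H0 t *m Xe Ep - Xe Ep *m H0 t) (W *m Xe Ep - Xe Ep *m V).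
have := mxnorm_ge0 (Xe Ep); have := mxnorm_ge0 W; have := mxnorm_ge0 V.
nra.
Qed.

Lemma proj_overlap_bound : exists c, forall (Ep : R) (UV UW : R -> 'M[C]_n), 0 < Ep ->
  schrodinger_solution T (fun t => HV Ep t) UV ->
  schrodinger_solution T (fun t => HW Ep t) UW ->
  mxnorm (p *m (adjmx (UW T) *m UV T *m p) - p) <= Ep^-1 * c.
Proof.
have [c hc] := intertwining_bound.
pose mu : R := (n * n)%:R * 2.
exists (((n * n)%:R * (2 * (mu * c * mu * T)) +
  (mu * mu + 1) * mxnorm (Xgen lam Pi V I)) * mxnorm p).
move=> Ep UV UW Ep_gt0 hUV hUW.
have hermV := penalized_hermitian Ep V_herm.
have hermW := penalized_hermitian Ep (W_hermitian I hsp V_herm).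
have T_in : 0 <= T <= T by rewrite lexx ltW.
have UW_proj : adjmx (UW T) *m p = p *m adjmx (UW T).
  apply: (schrodinger_conserved hUW hermW) T_in => t ht.
  exact: HW_proj_comm (closed_of_open ht).
have decomp : p *m (adjmx (UW T) *m UV T *m p) - p =
    ((adjmx (UW T) *m (p + Xe Ep) *m UV T - (p + Xe Ep)) -
     (adjmx (UW T) *m Xe Ep *m UV T - Xe Ep)) *m p.
  rewrite mulmxDr [(_ + _) *m UV T]mulmxDl opprD addrACA addrK.
  by rewrite mulmxBl lift_proj_idem !mulmxA UW_proj.
have hS := sandwich_bound hUV hUW hermV hermW
  (fun t ht => hc Ep t Ep_gt0 (closed_of_open ht)) (ltW T_gt0).
have hX := Xe_norm_le Ep_gt0.
have hXS : mxnorm (adjmx (UW T) *m Xe Ep *m UV T) <= mu * mxnorm (Xe Ep) * mu.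
  apply: mxnorm_mul3_le (lexx _) _.
    by rewrite mxnorm_adj mxnorm_unitary // (schrodinger_unitary hUW hermW).
  by rewrite mxnorm_unitary // (schrodinger_unitary hUV hermV).
have hmuX : mu * mxnorm (Xe Ep) * mu <= mu * mu * (Ep^-1 * mxnorm (Xgen lam Pi V I)).
  by rewrite mulrAC ler_wpM2l ?mulr_ge0.
rewrite decomp [leRHS]mulrA; apply: le_trans (mxnormM _ _) _.
apply: (ler_wpM2r (mxnorm_ge0 _)).
apply: le_trans (mxnormB _ _) _.
have := mxnormB (adjmx (UW T) *m Xe Ep *m UV T) (Xe Ep).
rewrite /mu in hXS hmuX *; lra.
Qed.

Lemma leakage_bound (N : 'M[C]_n -> R) : unitarily_invariant_norm N ->
  exists c K, forall (Ep : R) (UV UW : R -> 'M[C]_n), 0 < Ep -> c <= Ep ->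
  schrodinger_solution T (fun t => HV Ep t) UV ->
  schrodinger_solution T (fun t => HW Ep t) UW ->
  N ((UV T - UW T) *m p) <= K * Num.sqrt (Ep^-1 * c).
Proof.
move=> hN; have [c hc] := proj_overlap_bound.
have [K K_ge0 hK] := invariant_norm_le_mxnorm hN.
exists c, (K * ((n * n)%:R * 2 * Num.sqrt (2 * mxnorm p + 1) + 1)).
move=> Ep UV UW Ep_gt0 c_le hUV hUW.
have hermV := penalized_hermitian Ep V_herm.
have hermW := penalized_hermitian Ep (W_hermitian I hsp V_herm).
have T_in : 0 <= T <= T by rewrite lexx ltW.
have UW_unitary := unitary_mxC (schrodinger_unitary hUW hermW T_in).
have UV_unitaryL := schrodinger_unitary hUV hermV T_in.
set A := adjmx (UW T) *m UV T *m p.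
have -> : (UV T - UW T) *m p = UW T *m (A - p) *m 1%:M.
  by rewrite mulmx1 mulmxBr !mulmxA (proj1 UW_unitary) mul1mx mulmxBl.
have [_ _ _ _ N_inv] := hN.
rewrite N_inv //; last by apply: unitary_mxC; rewrite adjmx1 mulmx1.
have AA : adjmx A *m A = p.
  rewrite /A !adjmxM adjmxK lift_proj_adj -!mulmxA (mulmxA (UW T)) (proj1 UW_unitary).
  by rewrite mul1mx (mulmxA (adjmx (UV T))) UV_unitaryL mul1mx lift_proj_idem.
have overlap := hc Ep UV UW Ep_gt0 hUV hUW.
have overlap_le1 : mxnorm (p *m A - p) <= 1.
  by apply: le_trans overlap _; rewrite mulrC ler_pdivrMr // mul1r.
apply: le_trans (hK _) _; rewrite -[leRHS]mulrA ler_wpM2l //.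
apply: le_trans (partial_isometry_proj_bound lift_proj_adj lift_proj_idem AA overlap_le1) _.
apply: ler_wpM2l; first by rewrite addr_ge0 ?mulr_ge0 ?sqrtr_ge0.
by rewrite ler_sqrt // (le_trans (mxnorm_ge0 _) overlap).
Qed.

End StrongPenalty.

Lemma cvg_sqrt_invM0 (R : realType) (c : R) : Num.sqrt (x^-1 * c) @[x --> +oo] --> 0.
Proof.
have inv0 : x^-1 @[x --> +oo] --> (0 : R).
  by apply/gtr0_cvgV0; [exact: nbhs_pinfty_gt | exact: cvg_id].
rewrite -sqrtr0; apply: (continuous_cvg _ (@sqrt_continuous R 0)).
by rewrite -(mul0r c); apply: cvgM inv0 (cvg_cst c).
Qed.

Theorem theorem2 (R : realType) (dS dB k : nat) (T : R)
    (HSbar : R -> 'M[R[i]]_dS) (HB : 'M[R[i]]_dB) (Hp : 'M[R[i]]_dS)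
    (lam : 'I_k -> R) (Pi : 'I_k -> 'M[R[i]]_dS)
    (V : 'M[R[i]]_(dS * dB)) (I : {set 'I_k})
    (N : 'M[R[i]]_(dS * dB) -> R)
    (UV UW : R -> R -> 'M[R[i]]_(dS * dB)) :
  0 < T ->
  mx_continuous_on T HSbar ->
  (forall t, 0 <= t <= T -> hermitian_mx (HSbar t)) ->
  hermitian_mx HB ->
  hermitian_mx Hp ->
  spectral_decomposition Hp lam Pi ->
  hermitian_mx V ->
  let P : 'M[R[i]]_dS := \sum_(a in I) Pi a in
  let W : 'M[R[i]]_(dS * dB) :=
    \sum_(a in I) (liftS (Pi a) *m V *m liftS (Pi a)) in
  (forall t, 0 <= t <= T ->
     HSbar t *m P = P *m HSbar t /\ HSbar t *m Hp = Hp *m HSbar t) ->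
  let H0 := fun t => liftS (HSbar t) + liftB HB : 'M[R[i]]_(dS * dB) in
  (forall Ep : R, 0 < Ep -> schrodinger_solution T
     (fun t => H0 t + (Ep%:C) *: liftS Hp + V) (UV Ep)) ->
  (forall Ep : R, 0 < Ep -> schrodinger_solution T
     (fun t => H0 t + (Ep%:C) *: liftS Hp + W) (UW Ep)) ->
  unitarily_invariant_norm N ->
  N ((UV Ep T - UW Ep T) *m liftS P) @[Ep --> +oo] --> 0.
Proof.
move=> T_gt0 HSbar_cont HSbar_herm HB_herm Hp_herm hsp V_herm P W HSbar_comm H0 hUV hUW hN.
have [c [K bound]] := leakage_bound T_gt0 HSbar_cont HSbar_herm HB_herm Hp_herm hsp
  V_herm HSbar_comm hN.
apply: (squeeze_cvgr (f := fun=> 0) (h := fun Ep => K * Num.sqrt (Ep^-1 * c))).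
- near=> Ep.
  have Ep_gt0 : 0 < Ep by near: Ep; apply: nbhs_pinfty_gt; apply: num_real.
  have c_le : c <= Ep by near: Ep; apply: nbhs_pinfty_ge; apply: num_real.
  have [N_ge0 _ _ _ _] := hN; rewrite N_ge0 /=.
  exact: bound (hUV Ep Ep_gt0) (hUW Ep Ep_gt0).
- exact: cvg_cst.
- by rewrite -(mulr0 K); apply: cvgM (cvg_cst K) (cvg_sqrt_invM0 c).
Unshelve. all: by end_near.
Qed.
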